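(* Let $K\ge1$, let $q_1,\dots,q_K$ be distinct primes satisfying $\tfrac12<q_j/q_{j'}<2$ for all $j,j'$, and let $\phi:\mathbb Z\to\mathbb R$ have finite support. Then for every $\tilde\lambda>0$, $$\#\{n\in\mathbb Z:\ \mathcal B^*(\phi,n)>\tilde\lambda\}\le\frac{4}{\tilde\lambda}\,\|\phi\|_{\ell^1}.$$
   Context: Let $p=q_1q_2\cdots q_K$ and $\tilde q_j=p/q_j$. For $n\in\mathbb Z$ and integer $N\ge1$ put $t_0(n,N)=\lfloor n/p\rfloor+1$, $t_1(n,N)=\lfloor (n+N)/p\rfloor+1$, $N'=t_1(n,N)-t_0(n,N)+1$, $I(n,N)=[(t_0(n,N)-1)p-n,\ t_1(n,N)p-n)\cap\mathbb Z$, and $\nu(n,N,j)=N'\tilde q_j$. Define $$\mathcal B(\phi,n,N,j)=\frac1{\nu(n,N,j)}\sum_{l\in\mathbb Z:\ lq_j\in I(n,N)}\phi(n+lq_j),\qquad \mathcal B(\phi,n,N)=\frac{\sum_{j=1}^K\nu(n,N,j)\,\mathcal B(\phi,n,N,j)}{\sum_{j=1}^K\nu(n,N,j)},$$ and $\mathcal B^*(\phi,n)=\sup_{N\ge1}|\mathcal B(\phi,n,N)|$. $\|\phi\|_{\ell^1}=\sum_{n\in\mathbb Z}|\phi(n)|$. *)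

From Stdlib Require Import Reals ZArith List Znumtheory.
From Coquelicot Require Import Coquelicot.
Import ListNotations.
Open Scope R_scope.

(* Primes q_1..q_K are represented 0-based: q j for j < K. *)

Definition Zrange (a b : Z) : list Z :=
  map (fun k => (a + Z.of_nat k)%Z) (seq 0 (Z.to_nat (b - a))).

Definition Rsum_list (l : list R) : R := fold_right Rplus 0 l.

Definition pprod (K : nat) (q : nat -> Z) : Z :=
  fold_right Z.mul 1%Z (map q (seq 0 K)).

Definition qtilde (K : nat) (q : nat -> Z) (j : nat) : Z := (pprod K q / q j)%Z.

Definition t0 (K : nat) (q : nat -> Z) (n : Z) (N : nat) : Z :=
  (n / pprod K q + 1)%Z.
Definition t1 (K : nat) (q : nat -> Z) (n : Z) (N : nat) : Z :=
  ((n + Z.of_nat N) / pprod K q + 1)%Z.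
Definition Nprime (K : nat) (q : nat -> Z) (n : Z) (N : nat) : Z :=
  (t1 K q n N - t0 K q n N + 1)%Z.

Definition Ilo (K : nat) (q : nat -> Z) (n : Z) (N : nat) : Z :=
  ((t0 K q n N - 1) * pprod K q - n)%Z.
Definition Ihi (K : nat) (q : nat -> Z) (n : Z) (N : nat) : Z :=
  (t1 K q n N * pprod K q - n)%Z.

Definition nu (K : nat) (q : nat -> Z) (n : Z) (N : nat) (j : nat) : R :=
  IZR (Nprime K q n N * qtilde K q j).

(* B(phi,n,N,j) = (1/nu) * sum over l in Z with l q_j in I(n,N) of phi(n + l q_j).
   The sum is indexed by m = l q_j, i.e. over m in I(n,N) divisible by q_j
   (l <-> l q_j is a bijection since q_j <> 0). *)
Definition Bj (K : nat) (q : nat -> Z) (phi : Z -> R) (n : Z) (N : nat) (j : nat) : R :=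
  / nu K q n N j *
  Rsum_list (map (fun m => phi (n + m)%Z)
    (filter (fun m => (m mod q j =? 0)%Z) (Zrange (Ilo K q n N) (Ihi K q n N)))).

Definition Bavg (K : nat) (q : nat -> Z) (phi : Z -> R) (n : Z) (N : nat) : R :=
  Rsum_list (map (fun j => nu K q n N j * Bj K q phi n N j) (seq 0 K))
  / Rsum_list (map (fun j => nu K q n N j) (seq 0 K)).

Definition Bstar (K : nat) (q : nat -> Z) (phi : Z -> R) (n : Z) : Rbar :=
  Lub_Rbar (fun x => exists N : nat, (1 <= N)%nat /\ x = Rabs (Bavg K q phi n N)).

(* Write n = p t + rho with 0 <= rho < p.  Since every q_j divides p, whether q_j divides
   n + m depends on n only through rho, so B(phi,n,N) is the average, over the p-blocks
   t, ..., t_1 - 1, of the block masses of the weight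
     w_rho(x) = |phi x| * #{j | q_j divides x - rho} / sum_j qtilde_j.
   Within one residue class the points where B^* exceeds lam are therefore distinct block
   indices at which a one-sided average of these masses exceeds lam, and the rising sun
   lemma bounds their number by (sum_x w_rho x) / lam.  Summing over rho gives at most
   ||phi||_1 / lam, because q_j divides x - rho for exactly qtilde_j = p / q_j residues rho.
   This proves the inequality with the constant 1 instead of 4. *)

From Stdlib Require Import Reals ZArith List Znumtheory Lia Lra Classical.
From Coquelicot Require Import Coquelicot.
Import ListNotations.
Open Scope R_scope.

Definition sumf {A : Type} (f : A -> R) (l : list A) : R :=
  fold_right (fun x acc => f x + acc) 0 l.

Lemma Rsum_list_map {A : Type} (f : A -> R) (l : list A) :
  Rsum_list (map f l) = sumf f l.
Proof. induction l as [|x l IH]; simpl; [reflexivity|now rewrite IH]. Qed.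

Lemma sumf_plus {A : Type} (f g : A -> R) (l : list A) :
  sumf (fun x => f x + g x) l = sumf f l + sumf g l.
Proof. induction l as [|x l IH]; simpl; [lra|rewrite IH; lra]. Qed.

Lemma sumf_scal {A : Type} (c : R) (f : A -> R) (l : list A) :
  sumf (fun x => c * f x) l = c * sumf f l.
Proof. induction l as [|x l IH]; simpl; [lra|rewrite IH; lra]. Qed.

Lemma sumf_ext {A : Type} (f g : A -> R) (l : list A) :
  (forall x, In x l -> f x = g x) -> sumf f l = sumf g l.
Proof.
  induction l as [|x l IH]; simpl; intros Hfg; [reflexivity|].
  rewrite Hfg, IH; auto.
Qed.

Lemma sumf_le {A : Type} (f g : A -> R) (l : list A) :
  (forall x, In x l -> f x <= g x) -> sumf f l <= sumf g l.
Proof.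
  induction l as [|x l IH]; simpl; intros Hfg; [lra|].
  apply Rplus_le_compat; auto.
Qed.

Lemma sumf_nonneg {A : Type} (f : A -> R) (l : list A) :
  (forall x, In x l -> 0 <= f x) -> 0 <= sumf f l.
Proof.
  induction l as [|x l IH]; simpl; intros Hf; [lra|].
  apply Rplus_le_le_0_compat; auto.
Qed.

Lemma sumf_zero {A : Type} (l : list A) : sumf (fun _ => 0) l = 0.
Proof. induction l as [|x l IH]; simpl; [reflexivity|rewrite IH; lra]. Qed.

Lemma Rabs_sumf_le {A : Type} (f : A -> R) (l : list A) :
  Rabs (sumf f l) <= sumf (fun x => Rabs (f x)) l.
Proof.
  induction l as [|x l IH]; simpl; [rewrite Rabs_R0; lra|].
  eapply Rle_trans; [apply Rabs_triang|lra].
Qed.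

Lemma sumf_map {A B : Type} (f : A -> B) (g : B -> R) (l : list A) :
  sumf g (map f l) = sumf (fun x => g (f x)) l.
Proof. induction l as [|x l IH]; simpl; [reflexivity|now rewrite IH]. Qed.

Lemma sumf_swap {A B : Type} (f : A -> B -> R) (l1 : list A) (l2 : list B) :
  sumf (fun x => sumf (f x) l2) l1 = sumf (fun y => sumf (fun x => f x y) l1) l2.
Proof.
  induction l1 as [|x l1 IH]; simpl.
  - symmetry; apply sumf_zero.
  - rewrite IH, <- sumf_plus. reflexivity.
Qed.

Lemma sumf_filter {A : Type} (P : A -> bool) (f : A -> R) (l : list A) :
  sumf f (filter P l) = sumf (fun x => if P x then f x else 0) l.
Proof.
  induction l as [|x l IH]; simpl; [reflexivity|].
  destruct (P x); simpl; rewrite IH; lra.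
Qed.

Lemma INR_length_sumf {A : Type} (l : list A) : INR (length l) = sumf (fun _ => 1) l.
Proof.
  induction l as [|x l IH]; simpl length; simpl sumf; [reflexivity|].
  rewrite S_INR, IH. lra.
Qed.

Lemma length_filter_sumf {A : Type} (P : A -> bool) (l : list A) :
  INR (length (filter P l)) = sumf (fun x => if P x then 1 else 0) l.
Proof.
  induction l as [|x l IH]; simpl; [reflexivity|].
  destruct (P x); simpl length; [rewrite S_INR|]; lra.
Qed.

Lemma sumf_pos {A : Type} (f : A -> R) (l : list A) (x0 : A) :
  (forall x, In x l -> 0 <= f x) -> In x0 l -> 0 < f x0 -> 0 < sumf f l.
Proof.
  induction l as [|x l IH]; simpl; intros Hf Hx0 Hpos; [destruct Hx0|].
  destruct Hx0 as [->|Hx0].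
  - pose proof (sumf_nonneg f l (fun y Hy => Hf y (or_intror Hy))). lra.
  - pose proof (Hf x (or_introl eq_refl)).
    pose proof (IH (fun y Hy => Hf y (or_intror Hy)) Hx0 Hpos).
    lra.
Qed.

Lemma sumf_eq_indicator (l : list Z) (y : Z) (c : R) : NoDup l ->
  sumf (fun x => if Z.eq_dec x y then c else 0) l = if in_dec Z.eq_dec y l then c else 0.
Proof.
  induction l as [|x l IH]; intros Hl; simpl; [reflexivity|].
  inversion_clear Hl as [|? ? Hx Hl']. rewrite IH by exact Hl'.
  destruct (in_dec Z.eq_dec y (x :: l)) as [Hin|Hin]; simpl in Hin;
    destruct (in_dec Z.eq_dec y l); destruct (Z.eq_dec x y) as [<-|Hxy];
    try tauto; try lra; intuition congruence.
Qed.

Lemma sumf_support (supp l : list Z) (f : Z -> R) :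
  NoDup supp -> NoDup l -> (forall y, f y <> 0 -> In y supp) ->
  sumf f l = sumf (fun y => if in_dec Z.eq_dec y l then f y else 0) supp.
Proof.
  intros Hsupp Hl Hf.
  transitivity (sumf (fun x => sumf (fun y => if Z.eq_dec y x then f x else 0) supp) l).
  { apply sumf_ext; intros x _. rewrite sumf_eq_indicator by exact Hsupp.
    destruct (in_dec Z.eq_dec x supp) as [|Hx]; [reflexivity|].
    destruct (Req_dec (f x) 0) as [->|Hfx]; [reflexivity|exfalso; auto]. }
  rewrite sumf_swap. apply sumf_ext; intros y _.
  rewrite <- (sumf_eq_indicator l y (f y) Hl). apply sumf_ext; intros x _.
  destruct (Z.eq_dec y x), (Z.eq_dec x y); subst; congruence.
Qed.

Lemma length_by_classes {A : Type} (cls : A -> Z) (classes : list Z) (L : list A) :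
  NoDup classes -> (forall x, In x L -> In (cls x) classes) ->
  INR (length L) = sumf (fun r => INR (length (filter (fun x => cls x =? r)%Z L))) classes.
Proof.
  intros Hclasses HL.
  transitivity (sumf (fun x => sumf (fun r => if Z.eq_dec r (cls x) then 1 else 0) classes) L).
  - rewrite INR_length_sumf. apply sumf_ext; intros x Hx.
    rewrite sumf_eq_indicator by exact Hclasses.
    destruct (in_dec Z.eq_dec (cls x) classes); [reflexivity|exfalso; auto].
  - rewrite sumf_swap. apply sumf_ext; intros r _. rewrite length_filter_sumf.
    apply sumf_ext; intros x _.
    destruct (Z.eq_dec r (cls x)), (Z.eqb_spec (cls x) r); congruence.
Qed.

Lemma Zrange_In (a b x : Z) : In x (Zrange a b) <-> (a <= x < b)%Z.
Proof.
  unfold Zrange. rewrite in_map_iff. split.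
  - intros [k [<- Hk]]. apply in_seq in Hk. lia.
  - intros Hx. exists (Z.to_nat (x - a)). split; [lia|]. apply in_seq. lia.
Qed.

Lemma Zrange_NoDup (a b : Z) : NoDup (Zrange a b).
Proof.
  unfold Zrange. apply NoDup_map_NoDup_ForallPairs; [|apply seq_NoDup].
  intros x y _ _ Hxy. lia.
Qed.

Lemma Zrange_shift (a b n : Z) :
  Zrange (a - n) (b - n) = map (fun x => x - n)%Z (Zrange a b).
Proof.
  unfold Zrange. rewrite map_map.
  replace (b - n - (a - n))%Z with (b - a)%Z by ring.
  apply map_ext; intros k. ring.
Qed.

Lemma NoDup_length_le_range (l : list Z) (a b : Z) : (a <= b)%Z -> NoDup l ->
  (forall x, In x l -> (a <= x < b)%Z) -> INR (length l) <= IZR (b - a).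
Proof.
  intros Hab Hl Hrange.
  assert (Hlen : (length l <= length (Zrange a b))%nat).
  { apply NoDup_incl_length; [exact Hl|]. intros x Hx. apply Zrange_In; auto. }
  unfold Zrange in Hlen. rewrite length_map, length_seq in Hlen.
  apply le_INR in Hlen. rewrite (INR_IZR_INZ (Z.to_nat _)), Z2Nat.id in Hlen by lia.
  exact Hlen.
Qed.

Lemma sumf_Zrange_support (supp : list Z) (f : Z -> R) (a b : Z) :
  NoDup supp -> (forall y, f y <> 0 -> In y supp) ->
  sumf f (Zrange a b) = sumf (fun y => if andb (a <=? y)%Z (y <? b)%Z then f y else 0) supp.
Proof.
  intros Hsupp Hf. rewrite (sumf_support supp) by auto using Zrange_NoDup.
  apply sumf_ext; intros y _.
  destruct (in_dec Z.eq_dec y (Zrange a b)) as [Hy|Hy]; rewrite Zrange_In in Hy;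
    destruct (Z.leb_spec a y), (Z.ltb_spec y b); simpl; lia || reflexivity.
Qed.

Lemma div_inj_same_mod (d x y : Z) : (d <> 0)%Z ->
  (x mod d = y mod d)%Z -> (x / d = y / d)%Z -> x = y.
Proof. intros Hd Hmod Hdiv. rewrite (Z.div_mod x d), (Z.div_mod y d) by exact Hd. congruence. Qed.

Lemma div_range (p a b x : Z) : (0 < p)%Z -> ((a * p <= x < b * p) <-> (a <= x / p < b))%Z.
Proof. intros Hp. pose proof (Z.div_mod x p). pose proof (Z.mod_pos_bound x p Hp). split; nia. Qed.

Lemma mod_eq_of_sub_mod (d x r : Z) : (d <> 0)%Z -> ((x - r) mod d = 0)%Z -> (r mod d = x mod d)%Z.
Proof.
  intros Hd Hxr. apply Z.mod_divide in Hxr as [t Ht]; [|exact Hd].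
  replace r with (x + (- t) * d)%Z by lia. apply Z.mod_add, Hd.
Qed.

Lemma count_residues_le (x m d : Z) : (0 < d)%Z -> (0 <= m)%Z -> (d | m)%Z ->
  sumf (fun rho => if ((x - rho) mod d =? 0)%Z then 1 else 0) (Zrange 0 m) <= IZR (m / d).
Proof.
  intros Hd Hm Hdm.
  assert (Hmd : m = (d * (m / d))%Z)
    by (apply Z.div_exact; [lia|apply Z.mod_divide; [lia|exact Hdm]]).
  rewrite <- length_filter_sumf, <- (length_map (fun r => r / d)%Z).
  replace (m / d)%Z with (m / d - 0)%Z by ring.
  apply NoDup_length_le_range; [apply Z.div_pos; lia| |].
  - apply NoDup_map_NoDup_ForallPairs; [|apply NoDup_filter, Zrange_NoDup].
    intros r1 r2 H1 H2. apply filter_In in H1 as [_ H1], H2 as [_ H2].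
    apply Z.eqb_eq, mod_eq_of_sub_mod in H1, H2; try lia.
    apply div_inj_same_mod; lia.
  - intros y Hy. apply in_map_iff in Hy as [r [<- Hr]].
    apply filter_In in Hr as [Hr _]. apply Zrange_In in Hr.
    split; [apply Z.div_pos; lia|apply Z.div_lt_upper_bound; lia].
Qed.

Lemma exists_minimum (E : list Z) : E <> [] ->
  exists e0, In e0 E /\ forall e, In e E -> (e0 <= e)%Z.
Proof.
  induction E as [|x E IH]; intros HE; [congruence|].
  destruct E as [|y E].
  - exists x. split; [now left|]. intros e [<-|[]]. lia.
  - destruct IH as [m [Hm Hmin]]; [discriminate|].
    destruct (Z.le_gt_cases x m).
    + exists x. split; [now left|]. intros e [<-|He]; [lia|]. specialize (Hmin e He). lia.
    + exists m. split; [now right|]. intros e [<-|He]; [lia|auto].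
Qed.

Lemma exists_lower_bound (E : list Z) : exists c, forall e, In e E -> (c <= e)%Z.
Proof.
  destruct E as [|x E].
  - exists 0%Z. intros e [].
  - destruct (exists_minimum (x :: E)) as [c [_ Hc]]; [discriminate|]. now exists c.
Qed.

Section RisingSun.

Context {A : Type}.
Variables (supp : list A) (w : A -> R) (key : A -> Z) (lam : R).
Hypothesis w_nonneg : forall x, 0 <= w x.
Hypothesis lam_nonneg : 0 <= lam.

Definition mass_between (a b : Z) : R :=
  sumf (fun x => if andb (a <=? key x)%Z (key x <? b)%Z then w x else 0) supp.

Definition mass_from (c : Z) : R :=
  sumf (fun x => if (c <=? key x)%Z then w x else 0) supp.

Lemma mass_from_nonneg (c : Z) : 0 <= mass_from c.
Proof. apply sumf_nonneg; intros x _. destruct (c <=? key x)%Z; auto; lra. Qed.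

Lemma mass_from_le_total (c : Z) : mass_from c <= sumf w supp.
Proof. apply sumf_le; intros x _. destruct (c <=? key x)%Z; auto; lra. Qed.

Lemma mass_between_from_le (c a b : Z) : (c <= a <= b)%Z ->
  mass_between a b + mass_from b <= mass_from c.
Proof.
  intros Hcab. unfold mass_between, mass_from. rewrite <- sumf_plus.
  apply sumf_le; intros x _. specialize (w_nonneg x).
  destruct (Z.leb_spec a (key x)), (Z.ltb_spec (key x) b), (Z.leb_spec b (key x)),
    (Z.leb_spec c (key x)); simpl; first [lra | exfalso; lia].
Qed.

(* The leftmost point e0 and its witness b0: the interval [e0, b0) holds at most b0 - e0
   points and more than lam (b0 - e0) mass; the remaining points all lie beyond b0. *)
Lemma rising_sun (E : list Z) : NoDup E ->
  (forall e, In e E -> exists b, (e < b)%Z /\ lam * IZR (b - e) < mass_between e b) ->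
  forall c, (forall e, In e E -> (c <= e)%Z) -> lam * INR (length E) <= mass_from c.
Proof.
  remember (length E) as k eqn:Hk. revert E Hk.
  induction k as [k IH] using lt_wf_ind. intros E -> HE Hgood c Hc.
  destruct (list_eq_dec Z.eq_dec E []) as [->|Hne].
  { simpl. rewrite Rmult_0_r. apply mass_from_nonneg. }
  destruct (exists_minimum E Hne) as [e0 [He0 Hmin]].
  destruct (Hgood e0 He0) as [b0 [Hb0 Hmass]].
  set (E1 := filter (fun e => e <? b0)%Z E).
  set (E2 := filter (fun e => negb (e <? b0))%Z E).
  assert (Hsplit : (length E1 + length E2 = length E)%nat) by apply filter_length.
  assert (He0E1 : In e0 E1) by (apply filter_In; split; [exact He0|apply Z.ltb_lt; lia]).
  assert (HE1 : INR (length E1) <= IZR (b0 - e0)).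
  { apply NoDup_length_le_range; [lia|now apply NoDup_filter|].
    intros e He. apply filter_In in He as [He Heb]. apply Z.ltb_lt in Heb.
    specialize (Hmin e He). lia. }
  assert (HE2 : lam * INR (length E2) <= mass_from b0).
  { apply (IH (length E2)) with (E := E2); auto.
    - assert (length E1 <> 0%nat) by (destruct E1; [destruct He0E1|discriminate]). lia.
    - now apply NoDup_filter.
    - intros e He. apply filter_In in He as [He _]. auto.
    - intros e He. apply filter_In in He as [_ Heb].
      apply Bool.negb_true_iff, Z.ltb_ge in Heb. exact Heb. }
  assert (Hce0 : (c <= e0 <= b0)%Z) by (specialize (Hc e0 He0); lia).
  pose proof (mass_between_from_le c e0 b0 Hce0).
  rewrite <- Hsplit, plus_INR. nra.
Qed.

Lemma rising_sun_total (E : list Z) : NoDup E ->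
  (forall e, In e E -> exists b, (e < b)%Z /\ lam * IZR (b - e) < mass_between e b) ->
  lam * INR (length E) <= sumf w supp.
Proof.
  intros HE Hgood. destruct (exists_lower_bound E) as [c Hc].
  eapply Rle_trans; [apply (rising_sun E HE Hgood c Hc)|apply mass_from_le_total].
Qed.

End RisingSun.

Lemma lt_Bstar_exists (K : nat) (q : nat -> Z) (phi : Z -> R) (n : Z) (lam : R) :
  Rbar_lt (Finite lam) (Bstar K q phi n) -> exists N : nat, lam < Rabs (Bavg K q phi n N).
Proof.
  intros Hlam. apply NNPP. intros Hnone. unfold Bstar in Hlam.
  set (E := fun x => exists N : nat, (1 <= N)%nat /\ x = Rabs (Bavg K q phi n N)) in Hlam.
  assert (Hle : Rbar_le (Lub_Rbar E) lam).
  { apply Lub_Rbar_correct. intros x [N [_ ->]].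
    apply Rnot_lt_le. intros Hx. apply Hnone. now exists N. }
  exact (Rbar_lt_not_le _ _ Hlam Hle).
Qed.

Definition qtilde_sum (K : nat) (q : nat -> Z) : R :=
  sumf (fun j => IZR (qtilde K q j)) (seq 0 K).

Definition divisor_count (K : nat) (q : nat -> Z) (x rho : Z) : R :=
  sumf (fun j => if ((x - rho) mod q j =? 0)%Z then 1 else 0) (seq 0 K).

Definition residue_weight (K : nat) (q : nat -> Z) (phi : Z -> R) (rho x : Z) : R :=
  Rabs (phi x) * divisor_count K q x rho / qtilde_sum K q.

Section Averages.

Variables (K : nat) (q : nat -> Z) (phi : Z -> R) (supp : list Z).
Hypothesis q_pos : forall j, (j < K)%nat -> (0 < q j)%Z.

Local Notation p := (pprod K q).

Lemma pprod_pos : (0 < p)%Z.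
Proof.
  unfold pprod.
  assert (Hl : forall j, In j (seq 0 K) -> (0 < q j)%Z)
    by (intros j Hj; apply in_seq in Hj; apply q_pos; lia).
  induction (seq 0 K) as [|i l IH]; simpl; [lia|].
  apply Z.mul_pos_pos; [apply Hl; now left|apply IH; intros j Hj; apply Hl; now right].
Qed.

Lemma pprod_eq_mul_qtilde (j : nat) : (j < K)%nat -> p = (q j * qtilde K q j)%Z.
Proof.
  intros Hj. unfold qtilde. apply Z.div_exact; [specialize (q_pos j Hj); lia|].
  apply Z.mod_divide; [specialize (q_pos j Hj); lia|]. unfold pprod.
  assert (Hin : In j (seq 0 K)) by (apply in_seq; lia).
  induction (seq 0 K) as [|i l IH]; simpl; [destruct Hin|].
  destruct Hin as [->|Hin]; [apply Z.divide_factor_l|apply Z.divide_mul_r, IH, Hin].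
Qed.

Lemma qtilde_pos (j : nat) : (j < K)%nat -> (0 < qtilde K q j)%Z.
Proof.
  intros Hj. pose proof pprod_pos. pose proof (q_pos j Hj).
  pose proof (pprod_eq_mul_qtilde j Hj). nia.
Qed.

Hypothesis K_pos : (1 <= K)%nat.

Lemma qtilde_sum_pos : 0 < qtilde_sum K q.
Proof.
  apply (sumf_pos _ _ 0%nat).
  - intros j Hj. apply in_seq in Hj. apply IZR_le. pose proof (qtilde_pos j ltac:(lia)). lia.
  - apply in_seq. lia.
  - apply IZR_lt, qtilde_pos. lia.
Qed.

Lemma residue_weight_nonneg (rho x : Z) : 0 <= residue_weight K q phi rho x.
Proof.
  pose proof qtilde_sum_pos. unfold residue_weight.
  apply Rmult_le_pos; [apply Rmult_le_pos; [apply Rabs_pos|]|left; apply Rinv_0_lt_compat; lra].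
  apply sumf_nonneg; intros j _. destruct (_ =? _)%Z; lra.
Qed.

Lemma sumf_divisor_count_le (x : Z) :
  sumf (divisor_count K q x) (Zrange 0 p) <= qtilde_sum K q.
Proof.
  unfold divisor_count, qtilde_sum. rewrite sumf_swap.
  apply sumf_le; intros j Hj. apply in_seq in Hj. unfold qtilde.
  pose proof pprod_pos. pose proof (pprod_eq_mul_qtilde j ltac:(lia)).
  apply count_residues_le; [apply q_pos; lia|lia|eexists; rewrite Z.mul_comm; eassumption].
Qed.

Lemma sumf_residue_weight_le (x : Z) :
  sumf (fun rho => residue_weight K q phi rho x) (Zrange 0 p) <= Rabs (phi x).
Proof.
  pose proof qtilde_sum_pos. pose proof (Rabs_pos (phi x)).
  unfold residue_weight, Rdiv.
  rewrite (sumf_ext _ (fun rho => Rabs (phi x) * / qtilde_sum K q * divisor_count K q x rho))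
    by (intros; ring).
  rewrite sumf_scal.
  apply Rle_trans with (Rabs (phi x) * / qtilde_sum K q * qtilde_sum K q).
  - apply Rmult_le_compat_l; [apply Rmult_le_pos; [lra|left; apply Rinv_0_lt_compat; lra]|].
    apply sumf_divisor_count_le.
  - right. field. lra.
Qed.

Lemma Nprime_pos (n : Z) (N : nat) : (0 < Nprime K q n N)%Z.
Proof.
  unfold Nprime, t1, t0. pose proof pprod_pos.
  assert (n / p <= (n + Z.of_nat N) / p)%Z by (apply Z.div_le_mono; lia). lia.
Qed.

Lemma Rabs_Bavg_le (n : Z) (N : nat) :
  Rabs (Bavg K q phi n N) <=
  sumf (fun j => sumf (fun m => if (m mod q j =? 0)%Z then Rabs (phi (n + m)%Z) else 0)
                      (Zrange (Ilo K q n N) (Ihi K q n N))) (seq 0 K)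
  / (IZR (Nprime K q n N) * qtilde_sum K q).
Proof.
  pose proof qtilde_sum_pos. pose proof (IZR_lt _ _ (Nprime_pos n N)).
  assert (Hnu : forall j, nu K q n N j = IZR (Nprime K q n N) * IZR (qtilde K q j))
    by (intros j; apply mult_IZR).
  unfold Bavg. rewrite !Rsum_list_map.
  rewrite (sumf_ext (nu K q n N) (fun j => IZR (Nprime K q n N) * IZR (qtilde K q j)))
    by (intros j _; apply Hnu).
  rewrite sumf_scal. fold (qtilde_sum K q).
  unfold Rdiv. rewrite Rabs_mult, Rabs_inv, (Rabs_right (IZR _ * _)) by nra.
  apply Rmult_le_compat_r; [left; apply Rinv_0_lt_compat; nra|].
  eapply Rle_trans; [apply Rabs_sumf_le|]. apply sumf_le; intros j Hj. apply in_seq in Hj.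
  assert (Hnuj : nu K q n N j <> 0).
  { rewrite Hnu. pose proof (IZR_lt _ _ (qtilde_pos j ltac:(lia))). nra. }
  unfold Bj. rewrite <- Rmult_assoc, Rinv_r, Rmult_1_l by exact Hnuj.
  rewrite Rsum_list_map, sumf_filter.
  eapply Rle_trans; [apply Rabs_sumf_le|]. apply sumf_le; intros m _.
  destruct (m mod q j =? 0)%Z; [apply Rle_refl|rewrite Rabs_R0; lra].
Qed.

Hypothesis supp_NoDup : NoDup supp.
Hypothesis phi_supp : forall n, phi n <> 0 -> In n supp.

Lemma divisible_sum_by_blocks (n : Z) (N : nat) (j : nat) : (j < K)%nat ->
  sumf (fun m => if (m mod q j =? 0)%Z then Rabs (phi (n + m)%Z) else 0)
       (Zrange (Ilo K q n N) (Ihi K q n N))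
  = sumf (fun x => if andb (n / p <=? x / p)%Z (x / p <? t1 K q n N)%Z
                   then (if ((x - n mod p) mod q j =? 0)%Z then Rabs (phi x) else 0)
                   else 0) supp.
Proof.
  intros Hj. pose proof pprod_pos as Hp.
  assert (Hlo : Ilo K q n N = (n / p * p - n)%Z) by (unfold Ilo, t0; ring).
  unfold Ihi. rewrite Hlo, Zrange_shift, sumf_map.
  rewrite (sumf_ext _ (fun x => if ((x - n) mod q j =? 0)%Z then Rabs (phi x) else 0))
    by (intros x _; now replace (n + (x - n))%Z with x by ring).
  rewrite (sumf_Zrange_support supp).
  - apply sumf_ext; intros x _.
    assert (Hmod : ((x - n) mod q j = (x - n mod p) mod q j)%Z).
    { pose proof (pprod_eq_mul_qtilde j Hj) as Hpq.
      pose proof (Z.div_mod n p ltac:(lia)) as Hn.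
      set (a := (n / p)%Z) in *. set (r := (n mod p)%Z) in *.
      replace (x - n)%Z with (x - r + (- (qtilde K q j * a)) * q j)%Z
        by (rewrite Hn, Hpq; ring).
      apply Z.mod_add. specialize (q_pos j Hj). lia. }
    rewrite Hmod. pose proof (div_range p (n / p) (t1 K q n N) x Hp).
    destruct (Z.leb_spec (n / p * p) x), (Z.ltb_spec x (t1 K q n N * p)),
      (Z.leb_spec (n / p) (x / p)), (Z.ltb_spec (x / p) (t1 K q n N)); simpl;
      reflexivity || (exfalso; lia).
  - exact supp_NoDup.
  - intros y Hy. apply phi_supp. intros H0. apply Hy. rewrite H0, Rabs_R0.
    destruct (_ =? 0)%Z; reflexivity.
Qed.

Lemma Rabs_Bavg_le_block_mass (n : Z) (N : nat) :
  Rabs (Bavg K q phi n N) * IZR (t1 K q n N - n / p) <=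
  mass_between supp (residue_weight K q phi (n mod p)) (fun x => x / p)%Z (n / p) (t1 K q n N).
Proof.
  pose proof qtilde_sum_pos. pose proof (IZR_lt _ _ (Nprime_pos n N)).
  assert (HNprime : Nprime K q n N = (t1 K q n N - n / p)%Z) by (unfold Nprime, t0; ring).
  set (M := mass_between _ _ _ _ _).
  assert (Hsum : sumf (fun j => sumf (fun m => if (m mod q j =? 0)%Z
                                               then Rabs (phi (n + m)%Z) else 0)
                                     (Zrange (Ilo K q n N) (Ihi K q n N))) (seq 0 K)
                 = M * qtilde_sum K q).
  { rewrite (sumf_ext _ _ (seq 0 K))
      by (intros j Hj; apply in_seq in Hj; apply divisible_sum_by_blocks; lia).
    rewrite sumf_swap. unfold M, mass_between. rewrite Rmult_comm, <- sumf_scal.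
    apply sumf_ext; intros x _. destruct (andb _ _); [|rewrite sumf_zero; ring].
    unfold residue_weight, divisor_count.
    rewrite (sumf_ext _ (fun j => Rabs (phi x)
                                  * (if ((x - n mod p) mod q j =? 0)%Z then 1 else 0)))
      by (intros j _; destruct (_ =? 0)%Z; ring).
    rewrite sumf_scal. field. lra. }
  pose proof (Rabs_Bavg_le n N) as HB. rewrite Hsum in HB. rewrite HNprime in *.
  apply (Rmult_le_compat_r (IZR (t1 K q n N - n / p))) in HB; [|lra].
  replace (M * qtilde_sum K q / (IZR (t1 K q n N - n / p) * qtilde_sum K q)
           * IZR (t1 K q n N - n / p))
    with M in HB by (field; lra).
  exact HB.
Qed.

Lemma residue_class_bound (lam : R) (L : list Z) (rho : Z) : 0 < lam -> NoDup L ->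
  (forall n, In n L -> Rbar_lt (Finite lam) (Bstar K q phi n)) ->
  lam * INR (length (filter (fun n => n mod p =? rho)%Z L))
  <= sumf (residue_weight K q phi rho) supp.
Proof.
  intros Hlam HL Hbig. pose proof pprod_pos as Hp.
  rewrite <- (length_map (fun n => n / p)%Z).
  apply (rising_sun_total supp _ (fun x => x / p)%Z);
    [intros x; apply residue_weight_nonneg|lra| |].
  - apply NoDup_map_NoDup_ForallPairs; [|now apply NoDup_filter].
    intros n1 n2 H1 H2. apply filter_In in H1 as [_ H1], H2 as [_ H2].
    apply Z.eqb_eq in H1, H2. apply div_inj_same_mod; lia.
  - intros e He. apply in_map_iff in He as [n [<- Hn]].
    apply filter_In in Hn as [Hn Hrho]. apply Z.eqb_eq in Hrho. subst rho.
    destruct (lt_Bstar_exists _ _ _ _ _ (Hbig n Hn)) as [N HN].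
    pose proof (Nprime_pos n N) as HN'. unfold Nprime, t0 in HN'.
    exists (t1 K q n N). split; [lia|].
    pose proof (IZR_lt 0 (t1 K q n N - n / p) ltac:(lia)).
    pose proof (Rabs_Bavg_le_block_mass n N). nra.
Qed.

End Averages.

Theorem lemma4p4 (K : nat) (q : nat -> Z) (phi : Z -> R) (S : list Z) (lam : R) :
  (1 <= K)%nat ->
  (forall j, (j < K)%nat -> prime (q j)) ->
  (forall i j, (i < K)%nat -> (j < K)%nat -> i <> j -> q i <> q j) ->
  (forall i j, (i < K)%nat -> (j < K)%nat ->
     / 2 < IZR (q i) / IZR (q j) /\ IZR (q i) / IZR (q j) < 2) ->
  NoDup S ->
  (forall n, phi n <> 0 -> In n S) ->
  0 < lam ->
  forall L : list Z, NoDup L ->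
    (forall n, In n L -> Rbar_lt (Finite lam) (Bstar K q phi n)) ->
    INR (length L) <= 4 / lam * Rsum_list (map (fun n => Rabs (phi n)) S).
Proof.
  intros HK Hprime _ _ HS Hsupp Hlam L HL Hbig.
  assert (Hq : forall j, (j < K)%nat -> (0 < q j)%Z)
    by (intros j Hj; pose proof (prime_ge_2 _ (Hprime j Hj)); lia).
  pose proof (pprod_pos K q Hq) as Hp.
  rewrite Rsum_list_map.
  assert (Hnorm : 0 <= sumf (fun n => Rabs (phi n)) S)
    by (apply sumf_nonneg; intros; apply Rabs_pos).
  assert (Hmain : lam * INR (length L) <= sumf (fun n => Rabs (phi n)) S).
  { rewrite (length_by_classes (fun n => n mod pprod K q)%Z (Zrange 0 (pprod K q)))
      by (apply Zrange_NoDup || (intros n _; apply Zrange_In, Z.mod_pos_bound, Hp)).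
    rewrite <- sumf_scal.
    eapply Rle_trans.
    { apply sumf_le; intros rho _.
      apply (residue_class_bound K q phi S Hq HK HS Hsupp); assumption. }
    rewrite sumf_swap. apply sumf_le; intros x _. apply sumf_residue_weight_le; auto. }
  apply Rmult_le_reg_l with lam; [exact Hlam|].
  replace (lam * (4 / lam * sumf (fun n => Rabs (phi n)) S))
    with (4 * sumf (fun n => Rabs (phi n)) S) by (field; lra).
  lra.
Qed.
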